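(* Let $U\subset\mathbb{R}^{n\times n}$ be a compact set of matrices. Then every matrix $A\in U$ is stable if and only if there exists an $n\times n$ SOS matrix $P:\mathbb{R}^{n\times n}\to\mathbb{S}^{n\times n}$ such that $P(A)\succ0$ for all $A\in U$ and $P(A)-A^TP(A)A\succ0$ for all $A\in U$.
   Context: A matrix is stable if its spectral radius (maximum modulus of its eigenvalues) is less than one. A polynomial matrix $P$ (symmetric matrix with polynomial entries in the $n^2$ entries of $A$) is an SOS matrix if the scalar polynomial $y^TP(A)y$ in the variables $(A,y)$ is a sum of squares of polynomials. $\succ0$ denotes positive definiteness. *)

From HB Require Import structures.
From mathcomp Require Import all_boot all_order all_algebra.
From mathcomp Require Import mpoly.
From mathcomp Require Import all_classical all_reals topology normedtype.
From mathcomp.real_closed Require Import complex.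
Import numFieldNormedType.Exports.

Set Implicit Arguments.
Unset Strict Implicit.
Unset Printing Implicit Defensive.

Import Order.TTheory GRing.Theory Num.Theory.
Local Open Scope ring_scope.

Section Defs.
Variable R : realType.

Definition stable (n : nat) (A : 'M[R]_n) : Prop :=
  forall z : R[i], eigenvalue (map_mx (fun x : R => (x%:C)%C) A) z -> `|z| < 1.

Definition posdef (n : nat) (M : 'M[R]_n) : Prop :=
  forall x : 'cV[R]_n, x != 0 -> 0 < (x^T *m M *m x) 0 0.

(* Polynomial matrices: entries are polynomials in the n^2 entries of A;
   the entry A i j corresponds to the variable 'X_(mxvec_index i j). *)
Definition eval_pmx (n : nat) (P : 'M[{mpoly R[n * n]}]_n) (A : 'M[R]_n)
  : 'M[R]_n :=
  map_mx (fun p : {mpoly R[n * n]} => p.@[fun k => mxvec A 0 k]) P.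

Definition is_sos (k : nat) (q : {mpoly R[k]}) : Prop :=
  exists s : seq {mpoly R[k]}, q = \sum_(f <- s) f ^+ 2.

(* the scalar polynomial y^T P(A) y in the n*n + n variables (A, y) *)
Definition lift_A (n : nat) (p : {mpoly R[n * n]}) : {mpoly R[n * n + n]} :=
  comp_mpoly [tuple 'X_(lshift n k) | k < n * n] p.

Definition quad_form_poly (n : nat) (P : 'M[{mpoly R[n * n]}]_n)
  : {mpoly R[n * n + n]} :=
  \sum_(i < n) \sum_(j < n)
     'X_(rshift (n * n) i) * lift_A (P i j) * 'X_(rshift (n * n) j).

Definition sos_matrix (n : nat) (P : 'M[{mpoly R[n * n]}]_n) : Prop :=
  P^T = P /\ is_sos (quad_form_poly P).

End Defs.

From HB Require Import structures.
From mathcomp Require Import all_boot all_order all_algebra.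
From mathcomp Require Import mpoly.
From mathcomp Require Import all_classical all_reals topology normedtype.
From mathcomp.real_closed Require Import complex.
From mathcomp Require Import sequences.
From mathcomp Require Import ring lra.
Import numFieldNormedType.Exports.
Import Order.TTheory GRing.Theory Num.Theory.

Set Implicit Arguments.
Unset Strict Implicit.
Unset Printing Implicit Defensive.

Local Open Scope ring_scope.

(* If every A in U is stable, the roots of the characteristic polynomial of A
   lie in a disc of radius r < 1, and Cayley-Hamilton bounds the entries of
   A^k by c r^k; hence some power of A has Frobenius norm < 1.  This is an
   open condition, so finitely many exponents suffice on the compact set U,
   and since the Frobenius norm is submultiplicative a common multiple N + 1
   of them works for all of U.  Then P = sum_(k <= N) (X^k)^T X^k, with X the
   matrix of indeterminates, is an SOS matrix, P(A) >= I, and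
   P(A) - A^T P(A) A = I - (A^(N+1))^T A^(N+1) > 0 on U.
   Conversely, if w = x + i y is a complex eigenvector of A for z and q is the
   quadratic form of P(A), then q(Ax) + q(Ay) = |z|^2 (q(x) + q(y)), and the
   positivity of q and of q - q o A forces |z| < 1. *)

Lemma quad_trmx_mul (F : comNzRingType) n p (B : 'M[F]_(p, n)) (x : 'cV[F]_n) :
  x^T *m (B^T *m B) *m x = (B *m x)^T *m (B *m x).
Proof. by rewrite trmx_mul !mulmxA. Qed.

Lemma trmx_col_mul (F : comNzRingType) n (v : 'cV[F]_n) :
  (v^T *m v) 0 0 = \sum_i v i 0 ^+ 2.
Proof. by rewrite mxE; apply: eq_bigr => i _; rewrite mxE expr2. Qed.

Section Frobenius.
Variable F : realFieldType.

Lemma sqr_sum_mul_le k (a b : 'I_k -> F) :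
  (\sum_j a j * b j) ^+ 2 <= (\sum_j a j ^+ 2) * (\sum_j b j ^+ 2).
Proof.
set sa := \sum_j a j ^+ 2; set sb := \sum_j b j ^+ 2; set sab := \sum_j a j * b j.
(* Lagrange's identity, summed over ordered pairs (j, l). *)
have lagrange : \sum_j \sum_l (a j * b l - a l * b j) ^+ 2 = 2 * (sa * sb - sab ^+ 2).
  have -> : \sum_j \sum_l (a j * b l - a l * b j) ^+ 2 =
      \sum_j \sum_l (a j ^+ 2 * b l ^+ 2 - 2 * (a j * b j * (a l * b l)))
      + \sum_j \sum_l a l ^+ 2 * b j ^+ 2.
    rewrite -big_split /=; apply: eq_bigr => j _.
    by rewrite -big_split /=; apply: eq_bigr => l _; ring.
  have -> : \sum_j \sum_l (a j ^+ 2 * b l ^+ 2 - 2 * (a j * b j * (a l * b l)))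
      = sa * sb - 2 * sab ^+ 2.
    rewrite expr2 !big_distrlr /= mulr_sumr -sumrB; apply: eq_bigr => j _.
    by rewrite mulr_sumr -sumrB; apply: eq_bigr => l _; ring.
  by rewrite exchange_big /= -big_distrlr -/sa -/sb /=; ring.
have : 0 <= \sum_j \sum_l (a j * b l - a l * b j) ^+ 2.
  by apply: sumr_ge0 => j _; apply: sumr_ge0 => l _; apply: sqr_ge0.
by rewrite lagrange pmulr_rge0 // subr_ge0.
Qed.

Definition frob2 p q (M : 'M[F]_(p, q)) := \sum_i \sum_j M i j ^+ 2.

Lemma frob2_ge0 p q (M : 'M[F]_(p, q)) : 0 <= frob2 M.
Proof. by apply: sumr_ge0 => i _; apply: sumr_ge0 => j _; apply: sqr_ge0. Qed.

Lemma sqr_entry_le_frob2 p q (M : 'M[F]_(p, q)) i j : M i j ^+ 2 <= frob2 M.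
Proof.
rewrite /frob2 (bigD1 i) //= (bigD1 j) //= -addrA lerDl.
apply: addr_ge0; first by apply: sumr_ge0 => l _; apply: sqr_ge0.
by apply: sumr_ge0 => i' _; apply: sumr_ge0 => l _; apply: sqr_ge0.
Qed.

Lemma frob2_gt0 p q (M : 'M[F]_(p, q)) : M != 0 -> 0 < frob2 M.
Proof.
move=> M0; rewrite lt_def frob2_ge0 andbT; apply: contra M0 => /eqP frobM0.
apply/eqP/matrixP => i j; rewrite mxE; apply/eqP.
by rewrite -sqrf_eq0 eq_le sqr_ge0 andbT -frobM0 sqr_entry_le_frob2.
Qed.

Lemma frob2_mul_le p q r (M : 'M[F]_(p, q)) (N : 'M[F]_(q, r)) :
  frob2 (M *m N) <= frob2 M * frob2 N.
Proof.
rewrite /frob2 [X in _ * X]exchange_big big_distrlr /=.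
apply: ler_sum => i _; apply: ler_sum => l _.
by rewrite mxE; apply: sqr_sum_mul_le.
Qed.

Lemma frob2_exp_le n (M : 'M[F]_n) k : frob2 (M ^+ k.+1) <= frob2 M ^+ k.+1.
Proof.
elim: k => [|k IHk]; first by rewrite !expr1.
rewrite exprS [X in _ <= X]exprS -mulmxE.
apply: le_trans (frob2_mul_le _ _) _.
by apply: ler_wpM2l; [apply: frob2_ge0 | apply: IHk].
Qed.

Lemma frob2_exp_mul_lt1 n (A : 'M[F]_n) k q :
  frob2 (A ^+ k.+1) < 1 -> frob2 (A ^+ (k.+1 * q.+1)) < 1.
Proof.
move=> lt1; rewrite exprM (le_lt_trans (frob2_exp_le _ _)) //.
by rewrite exprn_ilt1 // frob2_ge0.
Qed.

Lemma frob2_le_entries p q (M : 'M[F]_(p, q)) b :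
  (forall i j, `|M i j| <= b) -> frob2 M <= (p * q)%:R * b ^+ 2.
Proof.
move=> Mb; apply: le_trans (_ : \sum_(i < p) \sum_(j < q) b ^+ 2 <= _).
  apply: ler_sum => i _; apply: ler_sum => j _.
  by have := Mb i j; rewrite ler_norml => /andP[]; nra.
by rewrite !sumr_const !card_ord mulr_natl mulrnA mulrnAC.
Qed.

Lemma frob2_col n (v : 'cV[F]_n) : frob2 v = (v^T *m v) 0 0.
Proof. by rewrite trmx_col_mul; apply: eq_bigr => i _; rewrite big_ord1. Qed.

End Frobenius.

Section AnnihilatedPowers.
Variables (F : numFieldType) (m : nat).

Lemma norm_entry_le_sum p q (X : 'M[F]_(p, q)) i j :
  `|X i j| <= \sum_i' \sum_j' `|X i' j'|.
Proof.
rewrite (bigD1 i) //= (bigD1 j) //= -addrA lerDl.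
apply: addr_ge0; first by apply: sumr_ge0.
by apply: sumr_ge0 => i' _; apply: sumr_ge0.
Qed.

Lemma annihilated_exp_mx_bound (B : 'M[F]_m.+1) (s : seq F) (r : F) :
  0 < r -> (forall z, z \in s -> `|z| < r) ->
  forall X : 'M[F]_m.+1, horner_mx B (\prod_(z <- s) ('X - z%:P)) *m X = 0 ->
  exists2 C, 0 <= C & forall k i j, `|(B ^+ k *m X) i j| <= C * r ^+ k.
Proof.
move=> r_gt0; elim: s => [|z s IHs] s_lt_r X.
  rewrite big_nil rmorph1 mul1mx => ->.
  by exists 0 => // k i j; rewrite mulmx0 mxE normr0 mul0r.
rewrite big_cons mulrC rmorphM /= rmorphB /= horner_mx_X horner_mx_C -mulmxA.
set Y := (B - z%:M) *m X => annY.
have [C1 C1_ge0 boundY] : exists2 C1, 0 <= C1 &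
    forall k i j, `|(B ^+ k *m Y) i j| <= C1 * r ^+ k.
  by apply: IHs annY => w ws; apply: s_lt_r; rewrite inE ws orbT.
have z_lt_r : `|z| < r := s_lt_r z (mem_head z s).
have gap_gt0 : 0 < r - `|z| by rewrite subr_gt0.
set c := \sum_i \sum_j `|X i j|.
have c_ge0 : 0 <= c by apply: sumr_ge0 => i _; apply: sumr_ge0.
pose D := c + C1 / (r - `|z|).
have D_ge0 : 0 <= D by apply: addr_ge0 => //; apply: divr_ge0 => //; apply: ltW.
have D_step : `|z| * D + C1 <= D * r.
  have -> : D * r = `|z| * D + D * (r - `|z|) by ring.
  rewrite lerD2l mulrDl divfK ?gt_eqF // lerDr.
  by rewrite mulr_ge0 // ltW.
exists D => // k; elim: k => [|k IHk] i j.
  rewrite expr0 mul1mx mulr1 (le_trans (norm_entry_le_sum X i j)) //.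
  by rewrite lerDl divr_ge0 // ltW.
have -> : B ^+ k.+1 *m X = z *: (B ^+ k *m X) + B ^+ k *m Y.
  rewrite /Y mulmxA mulmxBr mulmxBl mul_mx_scalar -scalemxAl mulmxE -exprSr.
  by rewrite addrC subrK.
rewrite mxE (le_trans (ler_normD _ _)) // mxE normrM exprS mulrA.
apply: le_trans (lerD (ler_wpM2l (normr_ge0 z) (IHk i j)) (boundY k i j)) _.
by rewrite mulrA -mulrDl ler_wpM2r // ?exprn_ge0 // ltW.
Qed.

End AnnihilatedPowers.

Section StablePowers.
Variable R : realType.
Local Open Scope complex_scope.

Lemma normc_real_complex (x : R) : `|x%:C| = `|x|%:C.
Proof. by rewrite normc_def /= expr0n /= addr0 sqrtr_sqr. Qed.

Lemma stable_exp_mx_bound m (A : 'M[R]_m.+1) : stable A ->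
  exists r : R, exists2 c : R, [&& 0 <= r, r < 1 & 0 <= c] &
    forall k i j, `|(A ^+ k) i j| <= c * r ^+ k.
Proof.
move=> stA; pose Ac := map_mx (fun x : R => x%:C) A.
have [s charAc] := closed_field_poly_normal (char_poly Ac).
rewrite (monicP (char_poly_monic Ac)) scale1r in charAc.
(* Moduli are taken in [R], where they can be maximized. *)
pose modulus (z : R[i]) := Num.sqrt (complex.Re z ^+ 2 + complex.Im z ^+ 2).
have s_lt1 z : z \in s -> modulus z < 1.
  move=> zs; rewrite -ltcR -normc_def; apply: stA.
  by rewrite eigenvalue_root_char charAc root_prod_XsubC.
pose rho := \big[Num.max/0]_(z <- s) modulus z.
have rho_ge0 : 0 <= rho by apply: bigmax_ge_id.
have rho_lt1 : rho < 1 by rewrite /rho big_seq; apply: bigmax_lt.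
pose r := (1 + rho) / 2.
have [C C_ge0 boundC] : exists2 C, 0 <= C &
    forall k i j, `|(Ac ^+ k *m 1) i j| <= C * r%:C ^+ k.
  apply: (annihilated_exp_mx_bound (s := s)).
  - by rewrite ltcR /r; lra.
  - move=> z zs; rewrite normc_def ltcR (@le_lt_trans _ _ rho) //.
      exact: (le_bigmax_seq 0 z predT modulus).
    by rewrite /r; lra.
  - by rewrite mulmx1 -charAc Cayley_Hamilton.
have [c c_ge0 C_eq] : exists2 c : R, 0 <= c & C = c%:C.
  case: C C_ge0 {boundC} => a b C_ge0; have /= b0 := ger0_Im C_ge0; subst b.
  by exists a; rewrite // -lecR.
exists r, c; first by apply/and3P; split; rewrite /r; lra.
move=> k i j; rewrite -lecR rmorphM rmorphXn.
by have := boundC k i j; rewrite C_eq mulmx1 -[Ac ^+ k]rmorphXn mxE normc_real_complex.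
Qed.

Lemma stable_frob2_exp_lt1 n (A : 'M[R]_n) : stable A -> exists k, frob2 (A ^+ k.+1) < 1.
Proof.
case: n A => [|m] A stA; first by exists 0%N; rewrite /frob2 big_ord0.
have [r [c /and3P[r_ge0 r_lt1 c_ge0] boundA]] := stable_exp_mx_bound stA.
pose N : R := m.+1%:R.
have N_ge0 : 0 <= N by [].
have Nc1_gt0 : 0 < N * c + 1 by nra.
have eps_gt0 : 0 < (N * c + 1)^-1 by rewrite invr_gt0.
have r_norm_lt1 : `|r| < 1 by rewrite ger0_norm.
have [k0 _ small] := cvgr_lt 0 (cvg_expr r_norm_lt1) _ eps_gt0.
exists k0; set e := r ^+ k0.+1.
have e_ge0 : 0 <= e by exact: exprn_ge0.
have Nce_lt1 : N * c * e < 1.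
  have := small k0.+1 (leqnSn k0); rewrite -/e.
  by rewrite -[_^-1]mul1r ltr_pdivlMr //; lra.
apply: le_lt_trans (frob2_le_entries (fun i j => boundA k0.+1 i j)) _.
have -> : (m.+1 * m.+1)%:R * (c * e) ^+ 2 = (N * c * e) ^+ 2 by rewrite natrM; ring.
by rewrite exprn_ilt1 // !mulr_ge0.
Qed.

End StablePowers.

Section Compactness.
Variable R : realType.
Local Open Scope classical_set_scope.

Lemma continuous_exp_mx_entry n k (i j : 'I_n) :
  continuous (fun B : 'M[R]_n => (B ^+ k) i j).
Proof.
elim: k i j => [|k IHk] i j.
  by under eq_fun do rewrite expr0; exact: cst_continuous.
under eq_fun do rewrite exprS -mulmxE mxE.
apply: continuous_big => [|l _]; first exact: add_continuous.
move=> B; apply: cvgM; [exact: nbhs_filter | exact: coord_continuous | exact: IHk].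
Qed.

Lemma continuous_frob2_exp n k : continuous (fun B : 'M[R]_n => frob2 (B ^+ k)).
Proof.
apply: continuous_big => [|i _]; first exact: add_continuous.
apply: continuous_big => [|j _]; first exact: add_continuous.
under eq_fun do rewrite expr2.
by move=> B; apply: cvgM; [exact: nbhs_filter | exact: continuous_exp_mx_entry..].
Qed.

Lemma compact_stable_frob2_exp_lt1 n (U : set 'M[R]_n) : compact U ->
  (forall A, U A -> stable A) -> exists N, forall A, U A -> frob2 (A ^+ N.+1) < 1.
Proof.
rewrite compact_cover => cU stU.
pose O k := [set B : 'M[R]_n | frob2 (B ^+ k.+1) < 1].
have O_open k : [set: nat] k -> open (O k).
  move=> _; apply: (@open_comp _ _ (fun B : 'M[R]_n => frob2 (B ^+ k.+1)) [set x | x < 1]).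
    by move=> B _; exact: continuous_frob2_exp.
  exact: open_lt.
have U_sub : U `<=` \bigcup_(k in [set: nat]) O k.
  by move=> A UA; have [k Ok] := stable_frob2_exp_lt1 (stU A UA); exists k.
have [D _ UD] := cU nat [set: nat] O O_open U_sub.
(* a common multiple of the finitely many exponents [k.+1], k in D *)
pose N := (\prod_(k <- finmap.enum_fset D) k.+1)%N.
have N_gt0 : (0 < N)%N by apply: prodn_gt0.
exists N.-1 => A UA; rewrite prednK //.
have [k kD Ok] := UD A UA.
have kD' : k \in finmap.enum_fset D by [].
rewrite /N (big_rem k kD') /= -(prednK (prodn_gt0 _)) //.
exact: frob2_exp_mul_lt1.
Qed.

End Compactness.

Section LyapunovSum.
Variables (F : comNzRingType) (n : nat).

Definition lyap_sum (M : 'M[F]_n) N := \sum_(k < N.+1) (M ^+ k)^T *m M ^+ k.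

Lemma lyap_sum_sym M N : (lyap_sum M N)^T = lyap_sum M N.
Proof. by rewrite linear_sum /=; apply: eq_bigr => k _; rewrite trmx_mul trmxK. Qed.

Lemma lyap_sumB M N :
  lyap_sum M N - M^T *m lyap_sum M N *m M = 1%:M - (M ^+ N.+1)^T *m M ^+ N.+1.
Proof.
pose f k := (M ^+ k)^T *m M ^+ k.
have -> : M^T *m lyap_sum M N *m M = \sum_(k < N.+1) f k.+1.
  rewrite mulmx_sumr mulmx_suml; apply: eq_bigr => k _.
  by rewrite /f exprSr -mulmxE trmx_mul !mulmxA.
rewrite /lyap_sum big_ord_recl big_ord_recr /= expr0 trmx1 mul1mx -/(f _).
by rewrite opprD addrA addrK.
Qed.

End LyapunovSum.

Lemma map_lyap_sum (F G : comNzRingType) n (f : {rmorphism F -> G}) (M : 'M[F]_n) N :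
  map_mx f (lyap_sum M N) = lyap_sum (map_mx f M) N.
Proof.
rewrite /lyap_sum map_mx_sum; apply: eq_bigr => k _.
by rewrite map_mxM -map_trmx rmorphXn.
Qed.

Section LyapunovSumReal.
Variables (R : realType) (n : nat).

Lemma posdef_lyap_sum (A : 'M[R]_n) N : posdef (lyap_sum A N).
Proof.
move=> x x_neq0; rewrite /lyap_sum mulmx_sumr mulmx_suml summxE big_ord_recl /=.
rewrite quad_trmx_mul expr0 mul1mx -frob2_col ltr_wpDr ?frob2_gt0 //.
by apply: sumr_ge0 => k _; rewrite quad_trmx_mul -frob2_col frob2_ge0.
Qed.

Lemma posdef_lyap_sumB (A : 'M[R]_n) N : frob2 (A ^+ N.+1) < 1 ->
  posdef (lyap_sum A N - A^T *m lyap_sum A N *m A).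
Proof.
move=> frob_lt1 x x_neq0.
rewrite lyap_sumB mulmxBr mulmxBl mulmx1 quad_trmx_mul mxE [X in _ + X]mxE.
rewrite -!frob2_col subr_gt0 (le_lt_trans (frob2_mul_le _ _)) //.
by rewrite gtr_pMl ?frob2_gt0.
Qed.

End LyapunovSumReal.

Section SosLyapunov.
Variable R : realType.

Lemma is_sos_sum_sqr k (I : Type) (r : seq I) (f : I -> {mpoly R[k]}) :
  is_sos (\sum_(i <- r) f i ^+ 2).
Proof. by exists (map f r); rewrite big_map. Qed.

Lemma is_sos_sum k (I : Type) (r : seq I) (f : I -> {mpoly R[k]}) :
  (forall i, is_sos (f i)) -> is_sos (\sum_(i <- r) f i).
Proof.
move=> f_sos; elim: r => [|i r [t sum_r]]; first by exists [::]; rewrite !big_nil.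
by have [s fi] := f_sos i; exists (s ++ t); rewrite big_cons big_cat fi sum_r.
Qed.

Variable n : nat.

Definition generic_mx : 'M[{mpoly R[n * n]}]_n := \matrix_(i, j) 'X_(mxvec_index i j).

Definition yvar : 'cV[{mpoly R[n * n + n]}]_n := \col_i 'X_(rshift (n * n) i).

Lemma quad_form_polyE (P : 'M[{mpoly R[n * n]}]_n) :
  quad_form_poly P = (yvar^T *m map_mx (@lift_A R n) P *m yvar) 0 0.
Proof.
apply/esym; rewrite mxE /quad_form_poly exchange_big /=; apply: eq_bigr => j _.
by rewrite mxE mulr_suml; apply: eq_bigr => i _; rewrite !mxE.
Qed.

Lemma sos_matrix_lyap_sum N : sos_matrix (lyap_sum generic_mx N).
Proof.
split; first exact: lyap_sum_sym.
rewrite quad_form_polyE /lift_A map_lyap_sum /lyap_sum mulmx_sumr mulmx_suml summxE.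
by apply: is_sos_sum => k; rewrite quad_trmx_mul trmx_col_mul; apply: is_sos_sum_sqr.
Qed.

Lemma eval_lyap_sum N (A : 'M[R]_n) :
  eval_pmx (lyap_sum generic_mx N) A = lyap_sum A N.
Proof.
rewrite /eval_pmx map_lyap_sum; congr lyap_sum.
by apply/matrixP => i j; rewrite !mxE /= mevalXU mxvecE.
Qed.

End SosLyapunov.

Lemma char_poly_trmx (F : comNzRingType) n (M : 'M[F]_n) : char_poly M^T = char_poly M.
Proof.
rewrite /char_poly -det_tr; congr (\det _).
by rewrite /char_poly_mx linearB /= tr_scalar_mx map_trmx trmxK.
Qed.

Section BilinearForm.
Variables (F : comNzRingType) (n : nat) (M : 'M[F]_n).

Definition bform (u v : 'cV[F]_n) := (u^T *m M *m v) 0 0.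

Lemma bformDl u v w : bform (u + v) w = bform u w + bform v w.
Proof. by rewrite /bform linearD /= !mulmxDl mxE. Qed.

Lemma bformDr u v w : bform w (u + v) = bform w u + bform w v.
Proof. by rewrite /bform !mulmxDr mxE. Qed.

Lemma bformZl a u v : bform (a *: u) v = a * bform u v.
Proof. by rewrite /bform linearZ /= -!scalemxAl mxE. Qed.

Lemma bformZr a u v : bform u (a *: v) = a * bform u v.
Proof. by rewrite /bform -!scalemxAr mxE. Qed.

Lemma bformC u v : M^T = M -> bform u v = bform v u.
Proof.
move=> M_sym; rewrite /bform.
have -> : (u^T *m M *m v) 0 0 = (u^T *m M *m v)^T 0 0 by rewrite [RHS]mxE.
by rewrite !trmx_mul trmxK M_sym mulmxA.
Qed.

End BilinearForm.

Section LyapunovStability.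
Variable R : realType.
Local Open Scope complex_scope.

Lemma posdef_bform_ge0 n (M : 'M[R]_n) u : posdef M -> 0 <= bform M u u.
Proof.
move=> M_pd; have [->|u_neq0] := eqVneq u 0; last exact/ltW/M_pd.
by rewrite /bform mulmx0 mxE.
Qed.

Lemma posdef_bform_add_gt0 n (M : 'M[R]_n) x y : posdef M ->
  (x != 0) || (y != 0) -> 0 < bform M x x + bform M y y.
Proof.
move=> M_pd /orP[x_neq0|y_neq0].
  by rewrite ltr_pwDl ?posdef_bform_ge0 //; apply: M_pd.
by rewrite ltr_pwDr ?posdef_bform_ge0 //; apply: M_pd.
Qed.

Lemma bform_lyap n (A Q : 'M[R]_n) u :
  bform (Q - A^T *m Q *m A) u u = bform Q u u - bform Q (A *m u) (A *m u).
Proof.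
by rewrite /bform mulmxBr mulmxBl [LHS]mxE [X in _ + X = _]mxE trmx_mul !mulmxA.
Qed.

Lemma eigenvector_Re_Im n (A : 'M[R]_n) (z : R[i]) (w : 'cV[R[i]]_n) :
  map_mx (fun x : R => x%:C) A *m w = z *: w ->
  let x := map_mx (@complex.Re R) w in let y := map_mx (@complex.Im R) w in
  A *m x = complex.Re z *: x + (- complex.Im z) *: y /\
  A *m y = complex.Im z *: x + complex.Re z *: y.
Proof.
have ReM (a b : R[i]) :
    complex.Re (a * b) = complex.Re a * complex.Re b - complex.Im a * complex.Im b.
  by case: a b => ? ? [].
have ImM (a b : R[i]) :
    complex.Im (a * b) = complex.Re a * complex.Im b + complex.Im a * complex.Re b.
  by case: a b => ? ? [].
move=> Aw x y; split; apply/matrixP => i j; rewrite !mxE.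
  have := congr1 (fun W : 'cV[R[i]]_n => complex.Re (W i j)) Aw.
  rewrite /= !mxE raddf_sum ReM mulNr => <-; apply: eq_bigr => l _.
  by rewrite !mxE /= ReM /= mul0r subr0.
have := congr1 (fun W : 'cV[R[i]]_n => complex.Im (W i j)) Aw.
rewrite /= !mxE raddf_sum ImM addrC => <-; apply: eq_bigr => l _.
by rewrite !mxE /= ImM /= mul0r addr0.
Qed.

Lemma eigenvalue_eigenvector_col (F : fieldType) n (M : 'M[F]_n) a :
  eigenvalue M a -> exists2 w : 'cV[F]_n, w != 0 & M *m w = a *: w.
Proof.
rewrite eigenvalue_root_char -char_poly_trmx -eigenvalue_root_char.
move=> /eigenvalueP [v Mv v_neq0]; exists v^T; first by rewrite trmx_eq0.
by have := congr1 trmx Mv; rewrite trmx_mul trmxK linearZ.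
Qed.

Lemma lyapunov_stable n (A Q : 'M[R]_n) : Q^T = Q -> posdef Q ->
  posdef (Q - A^T *m Q *m A) -> stable A.
Proof.
move=> Q_sym Q_pd L_pd z /eigenvalue_eigenvector_col [w w_neq0 Aw].
have [] := eigenvector_Re_Im Aw.
set x := map_mx _ w; set y := map_mx _ w; set a := complex.Re z; set b := complex.Im z.
move=> Ax Ay.
have xy_neq0 : (x != 0) || (y != 0).
  apply: contraR w_neq0; rewrite negb_or !negbK => /andP[/eqP x0 /eqP y0].
  apply/eqP/matrixP => i j.
  have := congr1 (fun M : 'cV[R]_n => M i j) x0.
  have := congr1 (fun M : 'cV[R]_n => M i j) y0; rewrite !mxE.
  by case: (w i j) => ? ? /= -> ->.
have rot : bform Q (A *m x) (A *m x) + bform Q (A *m y) (A *m y) =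
    (a ^+ 2 + b ^+ 2) * (bform Q x x + bform Q y y).
  by rewrite Ax Ay !(bformDl, bformDr, bformZl, bformZr) (bformC x y Q_sym); ring.
have S_gt0 := posdef_bform_add_gt0 Q_pd xy_neq0.
have := posdef_bform_add_gt0 L_pd xy_neq0; rewrite !bform_lyap => T_gt0.
have : 0 < (1 - (a ^+ 2 + b ^+ 2)) * (bform Q x x + bform Q y y).
  by rewrite mulrBl mul1r -rot; lra.
rewrite pmulr_lgt0 // subr_gt0 => ab_lt1.
by rewrite normc_def -[1]/(1%:C) ltcR -sqrtr1 ltr_sqrt.
Qed.

End LyapunovStability.

Theorem lemma22 (R : realType) (n : nat) (U : set 'M[R]_n) :
  compact U ->
  ((forall A : 'M[R]_n, U A -> stable A) <->
   exists P : 'M[{mpoly R[n * n]}]_n,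
     [/\ sos_matrix P,
         forall A : 'M[R]_n, U A -> posdef (eval_pmx P A)
       & forall A : 'M[R]_n, U A ->
           posdef (eval_pmx P A - A^T *m eval_pmx P A *m A)]).
Proof.
move=> cU; split=> [stU | [P [[P_sym _] P_pd L_pd]] A UA].
  have [N frob_lt1] := compact_stable_frob2_exp_lt1 cU stU.
  exists (lyap_sum (generic_mx R n) N); split.
  - exact: sos_matrix_lyap_sum.
  - by move=> A _; rewrite eval_lyap_sum; apply: posdef_lyap_sum.
  - by move=> A UA; rewrite eval_lyap_sum; apply/posdef_lyap_sumB/frob_lt1.
apply: (lyapunov_stable _ (P_pd A UA) (L_pd A UA)).
by rewrite /eval_pmx map_trmx P_sym.
Qed.
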